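(* Let $(X,d_X)$ and $(Y,d_Y)$ be ultrametric spaces and let $d$ be a partial distance-preserving metric on $X\times Y$ with $d_\infty\le d$. Suppose that $\mathcal N_\varepsilon(W\times Z)=\mathcal N_\varepsilon(W)\cdot\mathcal N_\varepsilon(Z)$ for all compact sets $W\subseteq X$, $Z\subseteq Y$ and every $\varepsilon>0$ (quantities computed in $(X,d_X)$, $(Y,d_Y)$, $(X\times Y,d)$ respectively). Then for all $x_1,x_2\in X$ and $y_1,y_2\in Y$, $$\min\{d((x_1,y_1),(x_2,y_2)),\,d((x_2,y_1),(x_1,y_2))\}=\max\{d_X(x_1,x_2),d_Y(y_1,y_2)\}.$$
   Context: $d_\infty((x_1,y_1),(x_2,y_2))=\max\{d_X(x_1,x_2),d_Y(y_1,y_2)\}$. A metric $d$ on $X\times Y$ is partial distance-preserving if $d((x_1,y),(x_2,y))=d_X(x_1,x_2)$ and $d((x,y_1),(x,y_2))=d_Y(y_1,y_2)$ for all $x,x_1,x_2\in X$, $y,y_1,y_2\in Y$. Ultrametric: $\rho(a,b)\le\max\{\rho(a,c),\rho(c,b)\}$. In a metric space $(M,\rho)$ with closed balls $B(c,r)=\{x:\rho(x,c)\le r\}$, $C$ is an $\varepsilon$-net for $V$ if $V\subseteq\bigcup_{c\in C}B(c,\varepsilon)$, and for totally bounded $V$ the covering number $\mathcal N_\varepsilon(V)$ is the smallest cardinality of a subset of $V$ that is an $\varepsilon$-net for $V$. *)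

From Stdlib Require Import Reals List.
Import ListNotations.
Open Scope R_scope.

Definition is_metric {M : Type} (d : M -> M -> R) : Prop :=
  (forall x y, 0 <= d x y) /\
  (forall x y, d x y = 0 <-> x = y) /\
  (forall x y, d x y = d y x) /\
  (forall x y z, d x z <= d x y + d y z).

Definition is_ultrametric {M : Type} (d : M -> M -> R) : Prop :=
  is_metric d /\ (forall a b c, d a b <= Rmax (d a c) (d c b)).

Definition is_open {M : Type} (d : M -> M -> R) (U : M -> Prop) : Prop :=
  forall x, U x -> exists r, 0 < r /\ forall y, d x y < r -> U y.

Definition is_compact {M : Type} (d : M -> M -> R) (V : M -> Prop) : Prop :=
  forall (I : Type) (U : I -> M -> Prop),
    (forall i, is_open d (U i)) ->
    (forall x, V x -> exists i, U i x) ->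
    exists l : list I, forall x, V x -> exists i, In i l /\ U i x.

Definition cball {M : Type} (d : M -> M -> R) (c : M) (r : R) : M -> Prop :=
  fun x => d x c <= r.

Definition is_net {M : Type} (d : M -> M -> R) (C : list M) (V : M -> Prop) (eps : R) : Prop :=
  forall v, V v -> exists c, In c C /\ cball d c eps v.

Definition covering_number {M : Type} (d : M -> M -> R) (V : M -> Prop) (eps : R) (n : nat) : Prop :=
  (exists C : list M, NoDup C /\ length C = n /\ (forall c, In c C -> V c) /\ is_net d C V eps) /\
  (forall C : list M, (forall c, In c C -> V c) -> is_net d C V eps -> (n <= length C)%nat).

Definition prod_set {X Y : Type} (W : X -> Prop) (Z : Y -> Prop) : X * Y -> Prop :=
  fun p => W (fst p) /\ Z (snd p).

Definition partial_distance_preserving {X Y : Type} (dX : X -> X -> R) (dY : Y -> Y -> R)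
  (d : X * Y -> X * Y -> R) : Prop :=
  (forall x1 x2 y, d (x1, y) (x2, y) = dX x1 x2) /\
  (forall x y1 y2, d (x, y1) (x, y2) = dY y1 y2).

Definition d_infty {X Y : Type} (dX : X -> X -> R) (dY : Y -> Y -> R) (p q : X * Y) : R :=
  Rmax (dX (fst p) (fst q)) (dY (snd p) (snd q)).

From Stdlib Require Import Reals List Lra.
Open Scope R_scope.

(* Write M = max{d_X(x1,x2), d_Y(y1,y2)} and call (x1,y1)-(x2,y2) and
   (x2,y1)-(x1,y2) the two diagonals of the "square" {x1,x2} x {y1,y2}.
   - Lower bound: d_infty <= d gives M <= d on each diagonal.
   - Upper bound: for every eps > 0 with M <= eps, the two-point sets
     {x1,x2} and {y1,y2} are compact and each has covering number 1 at
     scale eps (one point is an eps-net since their diameter is <= eps).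
     The product hypothesis makes the square's covering number 1*1 = 1, so
     a single corner c of the square is within eps of all four corners; in
     particular of the corner opposite to c, and that pair is a diagonal.
     Hence the smaller diagonal is <= eps.
   Letting eps decrease to M gives min(diagonals) <= M, so equality holds. *)

Definition pair_set {M : Type} (a b : M) : M -> Prop := fun x => x = a \/ x = b.

Lemma pair_set_compact {M : Type} (dm : M -> M -> R) (a b : M) :
  is_compact dm (pair_set a b).
Proof.
  intros I U _ Hcover.
  destruct (Hcover a (or_introl eq_refl)) as [ia Ha].
  destruct (Hcover b (or_intror eq_refl)) as [ib Hb].
  exists (ia :: ib :: nil). intros x [-> | ->].
  - exists ia; simpl; auto.
  - exists ib; simpl; auto.
Qed.

Lemma pair_set_covering_one {M : Type} (dm : M -> M -> R) (a b : M) (e : R) :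
  is_metric dm -> dm a b <= e -> covering_number dm (pair_set a b) e 1.
Proof.
  intros [Hpos [Hzero [Hsym _]]] Hab. split.
  - exists (a :: nil). repeat split.
    + constructor; [intros [] | constructor].
    + intros c [<- | []]. now left.
    + intros v [-> | ->]; exists a; split; simpl; auto; unfold cball.
      * rewrite (proj2 (Hzero a a) eq_refl). specialize (Hpos a b). lra.
      * rewrite Hsym. exact Hab.
  - intros C _ Hnet. destruct (Hnet a (or_introl eq_refl)) as [c [Hc _]].
    destruct C as [| c' C]; [destruct Hc | apply le_n_S, Nat.le_0_l].
Qed.

Lemma covering_one_center {M : Type} (dm : M -> M -> R) (V : M -> Prop) (e : R) :
  covering_number dm V e 1 -> exists c, V c /\ forall v, V v -> dm v c <= e.
Proof.
  intros [[C [_ [Hlen [HinV Hnet]]]] _].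
  destruct C as [| c [| c' C]]; try discriminate.
  exists c. split; [apply HinV; now left |].
  intros v Hv. destruct (Hnet v Hv) as [c0 [[<- | []] Hball]]. exact Hball.
Qed.

Section Square.

Variables (X Y : Type) (d : X * Y -> X * Y -> R).
Hypothesis d_sym : forall p q, d p q = d q p.
Variables (x1 x2 : X) (y1 y2 : Y).

Let square : X * Y -> Prop := prod_set (pair_set x1 x2) (pair_set y1 y2).

(* If a corner c of the square is within r of every corner, then in
   particular of its opposite corner, so one diagonal has length <= r. *)
Lemma square_center_diagonal (c : X * Y) (r : R) :
  square c -> (forall v, square v -> d v c <= r) ->
  d (x1, y1) (x2, y2) <= r \/ d (x2, y1) (x1, y2) <= r.
Proof.
  destruct c as [cx cy]. intros [Hcx Hcy] Hcenter. cbn in Hcx, Hcy.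
  assert (Hx1 : pair_set x1 x2 x1) by now left.
  assert (Hx2 : pair_set x1 x2 x2) by now right.
  assert (Hy1 : pair_set y1 y2 y1) by now left.
  assert (Hy2 : pair_set y1 y2 y2) by now right.
  destruct Hcx as [-> | ->]; destruct Hcy as [-> | ->].
  - left. rewrite d_sym. exact (Hcenter (x2, y2) (conj Hx2 Hy2)).
  - right. exact (Hcenter (x2, y1) (conj Hx2 Hy1)).
  - right. rewrite d_sym. exact (Hcenter (x1, y2) (conj Hx1 Hy2)).
  - left. exact (Hcenter (x1, y1) (conj Hx1 Hy1)).
Qed.

End Square.

Lemma diagonals_lower_bound (X Y : Type) (dX : X -> X -> R) (dY : Y -> Y -> R)
  (d : X * Y -> X * Y -> R) (dX_sym : forall a b, dX a b = dX b a)
  (hle : forall p q, d_infty dX dY p q <= d p q) (x1 x2 : X) (y1 y2 : Y) :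
  Rmax (dX x1 x2) (dY y1 y2) <= Rmin (d (x1, y1) (x2, y2)) (d (x2, y1) (x1, y2)).
Proof.
  apply Rmin_glb.
  - exact (hle (x1, y1) (x2, y2)).
  - rewrite (dX_sym x1 x2). exact (hle (x2, y1) (x1, y2)).
Qed.

Theorem proposition4p7 (X Y : Type) (dX : X -> X -> R) (dY : Y -> Y -> R)
  (d : X * Y -> X * Y -> R)
  (hX : is_ultrametric dX) (hY : is_ultrametric dY)
  (hd : is_metric d) (hpd : partial_distance_preserving dX dY d)
  (hle : forall p q, d_infty dX dY p q <= d p q)
  (hcov : forall (W : X -> Prop) (Z : Y -> Prop) (eps : R),
      is_compact dX W -> is_compact dY Z -> 0 < eps ->
      forall n m : nat, covering_number dX W eps n -> covering_number dY Z eps m ->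
      covering_number d (prod_set W Z) eps (n * m)%nat) :
  forall (x1 x2 : X) (y1 y2 : Y),
    Rmin (d (x1, y1) (x2, y2)) (d (x2, y1) (x1, y2)) = Rmax (dX x1 x2) (dY y1 y2).
Proof.
  intros x1 x2 y1 y2.
  destruct hX as [mX _], hY as [mY _].
  set (M := Rmax (dX x1 x2) (dY y1 y2)).
  assert (HMx : dX x1 x2 <= M) by apply Rmax_l.
  assert (HMy : dY y1 y2 <= M) by apply Rmax_r.
  assert (HM0 : 0 <= M) by (apply (Rle_trans _ (dX x1 x2)); [apply mX | exact HMx]).
  apply Rle_antisym; [| apply diagonals_lower_bound; [apply mX | exact hle]].
  apply Rle_plus_epsilon. intros t Ht.
  assert (Hsquare : covering_number d (prod_set (pair_set x1 x2) (pair_set y1 y2)) (M + t) 1%nat).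
  { apply (hcov _ _ (M + t) (pair_set_compact dX x1 x2) (pair_set_compact dY y1 y2) ltac:(lra) 1%nat 1%nat).
    - apply pair_set_covering_one; [exact mX |]. lra.
    - apply pair_set_covering_one; [exact mY |]. lra. }
  destruct (covering_one_center _ _ _ Hsquare) as [c [Hc Hcenter]].
  destruct (square_center_diagonal X Y d (proj1 (proj2 (proj2 hd))) x1 x2 y1 y2 c _ Hc Hcenter)
    as [Hdiag | Hdiag].
  - exact (Rle_trans _ _ _ (Rmin_l _ _) Hdiag).
  - exact (Rle_trans _ _ _ (Rmin_r _ _) Hdiag).
Qed.
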